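(* Let $G$ be a locally compact abelian group (written additively) not reduced to its neutral element, $E$ an $\mathbb{R}$-group, and $\mathcal{H}=(H_\varepsilon)_{\varepsilon\in E}$ a continuous absorptive action of $E$ on $G$ compatible with the group operation ($H_\varepsilon(x+y)=H_\varepsilon(x)+H_\varepsilon(y)$). For $\varepsilon\in E$ let $\widehat H_\varepsilon:\widehat G\to\widehat G$ be defined by $\langle\widehat H_\varepsilon(\gamma),x\rangle=\langle\gamma,H_\varepsilon(x)\rangle$ ($\gamma\in\widehat G$, $x\in G$). Then $\widehat{\mathcal{H}}=(\widehat H_\varepsilon)_{\varepsilon\in E}$ is a continuous absorptive action of $E$ on $\widehat G$.
   Context: $\widehat G$ is the dual group of $G$ (continuous homomorphisms $G\to\{z\in\mathbb{C}:|z|=1\}$) with pointwise multiplication and the topology of compact convergence; $\langle\gamma,x\rangle$ is the value of $\gamma$ at $x$. An $\mathbb{R}$-group is an abelian group $E$ (operation written multiplicatively) whose underlying set is a subset of $\mathbb{R}$ containing all positive integers, such that: (RG1) with the natural order of $\mathbb{R}$, $E$ is a totally ordered group; (RG2) with the topology induced from $\mathbb{R}$, $E$ is a locally compact group; (RG3) there is a nonconstant continuous homomorphism $h:E\to\mathbb{R}_+^*$ such that for every $\alpha\in E$ the set $\{\varepsilon\in E:\varepsilon\ge\alpha\}$ is integrable for $h\cdot m$, $m$ a Haar measure on $E$. $e$ is the identity of $E$, $\varepsilon^{-1}$ the group inverse; inequalities refer to the order of $\mathbb{R}$. An action of $E$ on a space $X$ is a family $(H_\varepsilon)_{\varepsilon\in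 E}$ of bijections of $X$ with $H_\varepsilon\circ H_{\varepsilon'}=H_{\varepsilon\varepsilon'}$, $H_e=\mathrm{id}_X$; continuous if $(\varepsilon,x)\mapsto H_\varepsilon(x)$ is continuous on $E\times X$; absorptive if some $\omega\in X$ satisfies: for every neighbourhood $V$ of $\omega$ and every $x\in X$ there are a neighbourhood $U$ of $x$ and $\alpha\in E$ with $H_{\varepsilon^{-1}}(U)\subset V$ for all $\varepsilon\le\alpha$. *)

From HB Require Import structures.
From mathcomp Require Import all_boot all_order all_algebra.
From mathcomp Require Import all_classical all_reals all_analysis.
From mathcomp Require Import complex.
Set Implicit Arguments. Unset Strict Implicit. Unset Printing Implicit Defensive.
Import Order.TTheory GRing.Theory Num.Theory.
Import numFieldTopology.Exports numFieldNormedType.Exports.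
Local Open Scope classical_set_scope.
Local Open Scope ring_scope.
Local Open Scope complex_scope.

(* R-groups.  E is given by its underlying set S (a subset of R), its  *)
(* group law mul, inverse inv and identity e.                          *)
Section RGroup.
Variable R : realType.

(* topology induced by R; Borel sets of S are the Borel sets of R      *)
(* contained in S).  m is a Borel measure on R concentrated on S.     *)
Definition is_Haar_measure (S : set R) (mul : R -> R -> R)
    (m : {measure set R -> \bar R}) :=
  [/\ m (~` S) = 0%E,
      m S != 0%E,
      (forall K, compact K -> K `<=` S -> (m K < +oo)%E) &
      (forall a, S a -> forall A, measurable A -> A `<=` S ->
          m (mul a @` A) = m A)].

Definition is_RGroup (S : set R) (mul : R -> R -> R) (inv : R -> R) (e : R) :=
  [/\
   [/\ [/\ S e,
       (forall x y, S x -> S y -> S (mul x y)) &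
       (forall x, S x -> S (inv x))],
       (forall x y z, S x -> S y -> S z -> mul x (mul y z) = mul (mul x y) z),
       (forall x y, S x -> S y -> mul x y = mul y x),
       (forall x, S x -> mul e x = x) &
       (forall x, S x -> mul (inv x) x = e)],
   (forall n : nat, S n.+1%:R),
   (* (RG1) totally ordered group for the natural order of R *)
   (forall x y z, S x -> S y -> S z -> x <= y -> mul x z <= mul y z),
   (* (RG2) locally compact group for the topology induced by R *)
   [/\ (forall x y, S x -> S y -> forall eps : R, 0 < eps ->
          exists2 d : R, 0 < d & forall x' y', S x' -> S y' ->
            `|x' - x| < d -> `|y' - y| < d -> `|mul x' y' - mul x y| < eps),
       (forall x, S x -> forall eps : R, 0 < eps ->
          exists2 d : R, 0 < d & forall x', S x' ->
            `|x' - x| < d -> `|inv x' - inv x| < eps) &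
       (forall x, S x -> exists U, nbhs x U /\
          exists K, [/\ compact K, K `<=` S & U `&` S `<=` K])] &
   exists h : R -> R,
     [/\ (forall x, S x -> 0 < h x),
         (forall x y, S x -> S y -> h (mul x y) = h x * h y),
         (forall x, S x -> forall eps : R, 0 < eps ->
            exists2 d : R, 0 < d & forall x', S x' ->
              `|x' - x| < d -> `|h x' - h x| < eps),
         (exists x y, [/\ S x, S y & h x != h y]) &
         exists m : {measure set R -> \bar R}, is_Haar_measure S mul m /\
           forall a, S a ->
             (\int[m]_(x in [set x | S x /\ (a <= x)%R]) (h x)%:E < +oo)%E]].

(* Actions of E = (S, mul, inv, e) on a topological space X; H e is   *)
(* only meaningful for e in S.                                          *)
Context (S : set R) (mul : R -> R -> R) (inv : R -> R) (e : R).

Definition is_action (X : Type) (H : R -> X -> X) :=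
  [/\ (forall a, S a -> bijective (H a)),
      (forall a b, S a -> S b -> H a \o H b = H (mul a b)) &
      H e = id].

(* continuity of (a, x) |-> H a x on E x X, E with the topology of R *)
Definition continuous_action (X : topologicalType) (H : R -> X -> X) :=
  forall a0, S a0 -> forall x0 (V : set X), nbhs (H a0 x0) V ->
    exists2 d : R, 0 < d & exists U, nbhs x0 U /\
      forall a, S a -> `|a - a0| < d -> forall x, U x -> V (H a x).

Definition absorptive (X : topologicalType) (H : R -> X -> X) :=
  exists w : X, forall V, nbhs w V -> forall x : X,
    exists U, nbhs x U /\ exists2 al, S al &
      forall a, S a -> a <= al -> forall y, U y -> V (H (inv a) y).

End RGroup.

(* the usual (modulus) topology on the complex numbers R[i] *)
HB.instance Definition _ (R : realType) :=
  PseudoPointedMetric.copy R[i] (R[i])^o.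

Section Dual.
Variables (R : realType) (G : topologicalZmodType).

Definition is_character (g : G -> R[i]) :=
  [/\ continuous g, (forall x y, g (x + y) = g x * g y) &
      (forall x, `|g x| = 1)].

Record character := Character {
  char_fun :> G -> R[i];
  char_funP : `[< is_character char_fun >] }.

HB.instance Definition _ := [isSub for char_fun].
HB.instance Definition _ := gen_eqMixin character.
HB.instance Definition _ := gen_choiceMixin character.

(* basic neighbourhoods of compact convergence *)
Definition cc_basic : set (set character) :=
  [set B | exists g0 : character, exists K : set G, exists d : R,
     [/\ compact K, 0 < d &
         B = [set g : character | forall x, K x -> `|g x - g0 x| < d%:C]]].

HB.instance Definition _ :=
  isSubBaseTopological.Build character cc_basic id.

Definition dual_action (H : R -> G -> G) (a : R) (g : character) : character :=
  insubd g (char_fun g \o H a).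

End Dual.

From HB Require Import structures.
From mathcomp Require Import all_boot all_order all_algebra.
From mathcomp Require Import all_classical all_reals all_analysis.
From mathcomp Require Import complex.
From mathcomp Require Import finmap lra.
Import Order.TTheory GRing.Theory Num.Theory.
Import numFieldTopology.Exports numFieldNormedType.Exports.
Local Open Scope classical_set_scope.
Local Open Scope ring_scope.
Local Open Scope complex_scope.

Set Implicit Arguments. Unset Strict Implicit. Unset Printing Implicit Defensive.

(* A neighbourhood base of a character h for the topology of compact convergence
   is given by the sets of characters that are uniformly d-close to h on a
   compact K. Continuity of the dual action at (a0, g0): compactness of K and
   local compactness of G give a compact C with H a (K) inside C for a near a0,
   and g0 \o H a uniformly close to g0 \o H a0 on K; so every g close to g0 on
   C has g \o H a close to g0 \o H a0 on K. Absorption: H a 0 = 0 and G is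
   Hausdorff, so 0 is the absorbing point of H, and by compactness
   H (inv a) (K) eventually lies in a compact neighbourhood C of 0 on which a
   given character g is close to g 0 = 1; hence characters close to g on C are
   eventually moved close to the trivial character on K. *)


Section ComplexDistance.
Variable R : rcfType.
Implicit Types (x y z : R[i]) (d : R).

Lemma normr_normc z : `|z| = (Normc.normc z)%:C.
Proof. by case: z. Qed.

Lemma ltc_normc z d : (`|z| < d%:C) = (Normc.normc z < d).
Proof. by rewrite normr_normc ltcR. Qed.

Lemma normc_distD x y z :
  Normc.normc (x - z) <= Normc.normc (x - y) + Normc.normc (y - z).
Proof. by rewrite -lecR rmorphD -!normr_normc; exact: ler_distD. Qed.

Lemma ltc_distD x y z d :
  `|x - y| < (d / 2)%:C -> `|y - z| < (d / 2)%:C -> `|x - z| < d%:C.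
Proof.
move=> xy yz; rewrite [d]splitr rmorphD.
exact: le_lt_trans (ler_distD y x z) (ltrD xy yz).
Qed.

End ComplexDistance.

Lemma near_dist (R : realType) (T : topologicalType) (f : T -> R[i]) (t : T) (d : R) :
  {for t, continuous f} -> 0 < d -> \forall s \near t, `|f s - f t| < d%:C.
Proof.
move=> ft d0; have /cvg_ballP/(_ d%:C) := ft.
by rewrite ltcR => /(_ d0); apply: filterS => s; rewrite /ball /= distrC.
Qed.

Lemma usc_compact_margin (T : topologicalType) (R : realType) (phi : T -> R)
    (K : set T) (d : R) :
  compact K ->
  (forall t, K t -> forall eps, 0 < eps -> \forall s \near t, phi s < phi t + eps) ->
  (forall t, K t -> phi t < d) ->
  exists2 r, 0 < r & forall t, K t -> phi t < d - r.
Proof.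
move=> /compact_near_coveringP cK phi_usc phi_lt.
have : \forall r \near (0 : R), K `<=` (fun t => phi t < d - r).
  apply: (cK R (nbhs (0 : R)) _ (nbhs_filter (0 : R))) => t Kt.
  have gap0 : 0 < (d - phi t) / 2 by have := phi_lt t Kt; lra.
  exists ([set s | phi s < phi t + (d - phi t) / 2], [set r | r < (d - phi t) / 2]).
    by split; [exact: phi_usc | exact: lt_nbhsl].
  by move=> [s r] /= [+ +]; lra.
move=> /nbhs_ballP [r /= r0 sub]; exists (r / 2); first lra.
by apply: sub; rewrite /ball /= sub0r normrN gtr0_norm; lra.
Qed.

Section Characters.
Variables (R : realType) (G : topologicalZmodType).

Lemma characterP (g : character R G) : is_character g.
Proof. exact/asboolP/char_funP. Qed.

Lemma character0 (g : character R G) : g 0 = 1.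
Proof.
have [_ gD gN] := characterP g.
have g0_neq0 : g 0 != 0 by rewrite -normr_eq0 gN oner_eq0.
by apply: (mulfI g0_neq0); rewrite mulr1 -gD addr0.
Qed.

Lemma character_comp (G' : topologicalZmodType) (g : character R G) (f : G' -> G) :
  continuous f -> {morph f : x y / x + y} -> is_character (g \o f).
Proof.
move=> fc fD; have [gc gD gN] := characterP g; split => //=.
- by move=> x; apply: continuous_comp; [exact: fc | exact: gc].
- by move=> x y; rewrite fD gD.
Qed.

Lemma trivial_is_character : is_character (fun _ : G => 1 : R[i]).
Proof.
split => [x | x y | x]; [exact: cst_continuous | by rewrite mulr1 | exact: normr1].
Qed.

Definition trivial_character : character R G :=
  Character (asboolT trivial_is_character).

Lemma dual_actionE (H : R -> G -> G) a (g : character R G) :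
  continuous (H a) -> {morph H a : x y / x + y} ->
  char_fun (dual_action H a g) = g \o H a.
Proof.
move=> Hc HD; rewrite /dual_action insubdK // unfold_in.
by apply/asboolP; exact: character_comp.
Qed.

End Characters.

Section CompactConvergence.
Variables (R : realType) (G : topologicalZmodType).
Implicit Types (g h : character R G) (K : set G) (d : R).

Definition ccball h K d : set (character R G) :=
  [set g | forall x, K x -> `|g x - h x| < d%:C].

Definition cc_nbhs h : set_system (character R G) :=
  filter_from [set Kd : set G * R | compact Kd.1 /\ 0 < Kd.2]
    (fun Kd => ccball h Kd.1 Kd.2).

Lemma cc_nbhs_filter h : Filter (cc_nbhs h).
Proof.
apply: filter_from_filter; first by exists (set0, 1); split => //; exact: compact0.
move=> [K d] [K' d'] /= [cK d0] [cK' d'0]; exists (K `|` K', Num.min d d').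
  by split; [exact: compactU | rewrite lt_min d0 d'0].
move=> g gKd; split => x Kx.
- by apply: lt_le_trans (gKd x (or_introl Kx)) _; rewrite lecR ge_min lexx.
- by apply: lt_le_trans (gKd x (or_intror Kx)) _; rewrite lecR ge_min lexx orbT.
Qed.

Lemma ccball_nbhs h K d : compact K -> 0 < d -> nbhs h (ccball h K d).
Proof.
move=> cK d0; apply: open_nbhs_nbhs; split; last first.
  by move=> x _; rewrite subrr normr0 ltcR.
exists (set1 (ccball h K d)); last by rewrite bigcup_set1.
move=> _ ->; exists (fset1 (ccball h K d)); last by rewrite set_fset1 bigcap_set1.
by move=> B; rewrite inE => /eqP ->; rewrite in_setE; exists h, K, d.
Qed.

Lemma cc_basic_cc_nbhs h B : cc_basic B -> B h -> cc_nbhs h B.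
Proof.
move=> [g [K [d [cK d0 ->]]]] /= hK.
pose phi x := Normc.normc (h x - g x).
have phi_usc x : K x -> forall eps, 0 < eps -> \forall y \near x, phi y < phi x + eps.
  move=> _ eps eps0; have [hc _ _] := characterP h; have [gc _ _] := characterP g.
  have eps20 : 0 < eps / 2 by lra.
  apply: filterS2 (near_dist (hc x) eps20) (near_dist (gc x) eps20) => y hy gy.
  have := normc_distD (h y) (h x) (g y); have := normc_distD (h x) (g x) (g y).
  rewrite distrC in gy; move: hy gy; rewrite /phi !ltc_normc; lra.
have [r r0 margin] : exists2 r, 0 < r & forall x, K x -> phi x < d - r.
  by apply: usc_compact_margin phi_usc _ => // x Kx; rewrite -ltc_normc; exact: hK.
exists (K, r) => // f fK x Kx; rewrite -(subrK r d) rmorphD [X in _ < X]addrC.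
by apply: le_lt_trans (ler_distD (h x) _ _) (ltrD (fK x Kx) _); rewrite ltc_normc margin.
Qed.

Lemma nbhs_characterE h : nbhs h = cc_nbhs h.
Proof.
have ccF := cc_nbhs_filter h.
apply/seteqP; split => V; last first.
  by move=> [[K d] /= [cK d0] sub]; apply: filterS sub _; exact: ccball_nbhs.
rewrite nbhsE => -[B [[D DI BE] Bh] BV]; apply: filterS BV _.
rewrite -BE in Bh *; case: Bh => A DA Ah.
have [F FD FA] := DI A DA.
apply: (@filterS _ _ _ A); first by move=> g Ag; exists A.
rewrite -FA; apply: filter_bigI => C CF; apply: cc_basic_cc_nbhs.
  by have := FD C CF; rewrite in_setE.
by move: Ah; rewrite -FA; apply.
Qed.

End CompactConvergence.

Lemma locally_compact_nbhs (X : topologicalType) :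
  locally_compact [set: X] -> forall x : X, exists2 C, nbhs x C & compact C.
Proof.
move=> lcX x; have [C xC [cC _]] := lcX x I.
by exists C => //; rewrite withinET in xC.
Qed.

Definition large_compacts (X : topologicalType) : set_system (set X) :=
  filter_from compact (fun C => [set C' | compact C' /\ C `<=` C']).
Arguments large_compacts : clear implicits.

Lemma large_compacts_filter (X : topologicalType) : Filter (large_compacts X).
Proof.
apply: filter_from_filter; first by exists set0; exact: compact0.
move=> C C' cC cC'; exists (C `|` C'); first exact: compactU.
by move=> D [cD CD]; split; split => // x Cx; apply: CD; [left | right].
Qed.

Section ContinuousAction.
Variables (R : realType) (X : topologicalType) (S : set R) (H : R -> X -> X).
Hypothesis Hcont : continuous_action S H.

Lemma continuous_action_continuous a : S a -> continuous (H a).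
Proof.
move=> Sa x V /(Hcont Sa) [d d0 [U [xU UV]]].
by apply: filterS xU => y Uy; apply: UV => //; rewrite subrr normr0.
Qed.

Lemma continuous_action_compact_image a0 K :
  (forall x : X, exists2 C, nbhs x C & compact C) -> S a0 -> compact K ->
  exists2 C, compact C & exists2 d : R, 0 < d &
    forall a, S a -> `|a - a0| < d -> forall y, K y -> C (H a y).
Proof.
move=> lcX Sa0 /compact_near_coveringP cK.
(* Near covering along the filter of large compact sets glues the finitely
   many compact neighbourhoods needed to cover the image of K. *)
have FF := filter_prod_filter (@large_compacts_filter X) (nbhs_filter a0).
have : \forall Cd \near filter_prod (large_compacts X) (nbhs a0),
    K `<=` (fun y => S Cd.2 -> Cd.1 (H Cd.2 y)).
  apply: (cK _ _ _ FF) => x _.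
  have [C HxC cC] := lcX (H a0 x).
  have [d d0 [U [xU UC]]] := Hcont Sa0 HxC.
  exists (U, [set Cd | (compact Cd.1 /\ C `<=` Cd.1) /\ `|Cd.2 - a0| < d]).
    split => //; exists ([set C' | compact C' /\ C `<=` C'], [set a | `|a - a0| < d]).
      split; first by exists C.
      by apply/nbhs_ballP; exists d => // a; rewrite /ball /= distrC.
    by move=> [C' a] [].
  by move=> [y [C' a]] /= [Uy [[_ CC'] ad]] Sa; exact/CC'/UC.
move=> [[B1 B2] /= [[C0 cC0 C0B1] /nbhs_ballP [d /= d0 dB2]] sub].
exists C0 => //; exists d => // a Sa ad y Ky.
have B1C0 : B1 C0 by apply: C0B1; split.
have B2a : B2 a by apply: dB2; rewrite /ball /= distrC.
exact: (sub (C0, a)).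
Qed.

Lemma continuous_action_uniform (f : X -> R[i]) a0 K eps :
  continuous f -> S a0 -> compact K -> 0 < eps ->
  exists2 d : R, 0 < d & forall a, S a -> `|a - a0| < d ->
    forall y, K y -> `|f (H a y) - f (H a0 y)| < eps%:C.
Proof.
move=> fc Sa0 /compact_near_coveringP cK eps0.
have : \forall a \near a0, K `<=` (fun y => S a -> `|f (H a y) - f (H a0 y)| < eps%:C).
  apply: (cK _ _ _ (nbhs_filter a0)) => x _.
  have eps20 : 0 < eps / 2 by lra.
  have [d d0 [U [xU UV]]] := Hcont Sa0 (near_dist (fc (H a0 x)) eps20).
  exists (U, [set a | `|a - a0| < d]).
    by split => //; apply/nbhs_ballP; exists d => // a; rewrite /ball /= distrC.
  move=> [y a] /= [Uy ad] Sa; apply: (@ltc_distD _ _ (f (H a0 x))); first exact: UV.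
  by rewrite distrC; apply: UV => //; rewrite subrr normr0.
move=> /nbhs_ballP [d /= d0 dK]; exists d => // a Sa ad y Ky.
by apply: dK => //; rewrite /ball /= distrC.
Qed.

End ContinuousAction.

Section Absorption.
Variables (R : realType) (X : topologicalType) (S : set R) (inv : R -> R)
  (H : R -> X -> X).

Definition absorbing_point (w : X) := forall V, nbhs w V -> forall x : X,
  exists U, nbhs x U /\ exists2 al, S al &
    forall a, S a -> a <= al -> forall y, U y -> V (H (inv a) y).

(* Not the filter -oo of R: S may be bounded below (e.g. by 0 when mul is the
   product of positive reals). *)
Definition downward : set_system R := filter_from S (fun al => [set a | a <= al]).

Lemma downward_filter : S !=set0 -> Filter downward.
Proof.
move=> S0; apply: filter_from_filter => // al al' Sal Sal'.
exists (Num.min al al'); first by rewrite /Num.min; case: ifP.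
by move=> a; rewrite /= le_min => /andP[].
Qed.

Lemma absorbing_point_compact w V K : S !=set0 -> absorbing_point w ->
  nbhs w V -> compact K ->
  exists2 al, S al & forall a, S a -> a <= al -> forall y, K y -> V (H (inv a) y).
Proof.
move=> S0 absw wV /compact_near_coveringP cK.
have : \forall a \near downward, K `<=` (fun y => S a -> V (H (inv a) y)).
  apply: (cK _ _ _ (downward_filter S0)) => x _.
  have [U [xU [al Sal UV]]] := absw V wV x.
  exists (U, [set a | a <= al]); first by split => //; exists al.
  by move=> [y a] /= [Uy ala] Sa; exact: UV.
by move=> [al Sal sub]; exists al => // a Sa ala y Ky; exact: sub.
Qed.

End Absorption.

Lemma absorbing_point0 (R : realType) (G : topologicalZmodType) (S : set R)
    (inv : R -> R) (H : R -> G -> G) (w : G) :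
  hausdorff_space G -> (forall a, S a -> S (inv a)) ->
  (forall a, S a -> H a 0 = 0) -> absorbing_point S inv H w -> w = 0.
Proof.
move=> hG SV H0 absw; apply: hG => A B wA B0.
have [U [U0 [al Sal UA]]] := absw A wA 0.
exists 0; split; last exact: nbhs_singleton B0.
by have := UA al Sal (lexx al) 0 (nbhs_singleton U0); rewrite H0 //; apply: SV.
Qed.

Section DualAction.
Variables (R : realType) (G : topologicalZmodType) (S : set R)
  (mul : R -> R -> R) (inv : R -> R) (e : R) (H : R -> G -> G).
Hypotheses (Hcont : forall a, S a -> continuous (H a))
  (HD : forall a, S a -> {morph H a : x y / x + y}).

Local Notation Hd := (dual_action H).

Let HdE a g : S a -> char_fun (Hd a g) = g \o H a.
Proof. by move=> Sa; exact: dual_actionE (Hcont Sa) (HD Sa). Qed.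

Let H0 a : S a -> H a 0 = 0.
Proof. by move=> Sa; apply/(addrI (H a 0)); rewrite -HD // !addr0. Qed.

(* The dual action is contravariant: Hd a \o Hd b = Hd (mul b a), so it is an
   action because E is abelian. *)
Lemma dual_is_action :
  is_RGroup S mul inv e -> is_action S mul e H -> is_action S mul e Hd.
Proof.
move=> [[[Se SM SV] _ mulC _ mulVr] _ _ _ _] [_ HM He].
have HdM a b g : S a -> S b -> Hd a (Hd b g) = Hd (mul b a) g.
  by move=> Sa Sb; apply: val_inj; rewrite /= (HdE g (SM _ _ Sb Sa)) !HdE // -HM.
have Hde g : Hd e g = g by apply: val_inj; rewrite /= HdE // He.
split.
- move=> a Sa; have SVa := SV a Sa.
  exists (Hd (inv a)) => g; rewrite HdM //.
  + by rewrite mulC // mulVr // Hde.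
  + by rewrite mulVr // Hde.
- by move=> a b Sa Sb; apply/funext => g /=; rewrite HdM // mulC.
- by apply/funext => g; exact: Hde.
Qed.

Lemma dual_continuous_action :
  (forall x : G, exists2 C, nbhs x C & compact C) ->
  continuous_action S H -> continuous_action S Hd.
Proof.
move=> lcG Hca a0 Sa0 g0 V; rewrite nbhs_characterE => -[[K d] /= [cK d0] KdV].
have d20 : 0 < d / 2 by lra.
have [C cC [d1 d10 KC]] := continuous_action_compact_image Hca lcG Sa0 cK.
have [g0c _ _] := characterP g0.
have [d2 d2_gt0 Kd2] := continuous_action_uniform Hca g0c Sa0 cK d20.
exists (Num.min d1 d2); first by rewrite lt_min d10 d2_gt0.
exists (ccball g0 C (d / 2)); split; first exact: ccball_nbhs.
move=> a Sa; rewrite lt_min => /andP[ad1 ad2] g gC; apply: KdV => x Kx.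
rewrite !HdE //=; apply: (ltc_distD (y := g0 (H a x))); first exact/gC/KC.
exact: Kd2.
Qed.

Lemma dual_absorptive :
  hausdorff_space G -> (forall x : G, exists2 C, nbhs x C & compact C) ->
  S !=set0 -> (forall a, S a -> S (inv a)) ->
  absorptive S inv H -> absorptive S inv Hd.
Proof.
move=> hG lcG S0 SV [w absw].
have w0 : w = 0 := absorbing_point0 hG SV H0 absw.
rewrite {}w0 in absw.
exists (trivial_character R G) => V; rewrite nbhs_characterE => -[[K d] /= [cK d0] KdV] g.
have [C OC cC] := lcG 0.
have [gc _ _] := characterP g.
have d20 : 0 < d / 2 by lra.
have OW : nbhs (0 : G) (C `&` [set y | `|g y - g 0| < (d / 2)%:C]).
  by apply: filterI => //; exact: near_dist (gc 0) d20.
have [al Sal KW] := absorbing_point_compact S0 absw OW cK.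
exists (ccball g C (d / 2)); split; first exact: ccball_nbhs.
exists al => // a Sa ala f fC; apply: KdV => x Kx.
have [Cx gx] := KW a Sa ala x Kx.
rewrite /= character0 in gx.
by rewrite /= (HdE f (SV a Sa)); exact: ltc_distD (fC _ Cx) gx.
Qed.

End DualAction.

Theorem proposition5p2 (R : realType) (G : topologicalZmodType)
  (S : set R) (mul : R -> R -> R) (inv : R -> R) (e : R)
  (H : R -> G -> G) :
  hausdorff_space G ->
  locally_compact [set: G] ->
  (exists x : G, x != 0) ->
  is_RGroup S mul inv e ->
  is_action S mul e H ->
  continuous_action S H ->
  absorptive S inv H ->
  (forall a, S a -> forall x y : G, H a (x + y) = H a x + H a y) ->
  [/\ (forall a, S a -> forall g : character R G,
          char_fun (dual_action H a g) = char_fun g \o H a),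
      is_action S mul e (dual_action H),
      continuous_action S (dual_action H) &
      absorptive S inv (dual_action H)].
Proof.
move=> hG lcG _ hE Hact Hca Habs HD.
have Hc := continuous_action_continuous Hca.
have lcG' := locally_compact_nbhs lcG.
have [[[Se _ SV] _ _ _ _] _ _ _ _] := hE.
split.
- by move=> a Sa g; apply: dual_actionE; [exact: Hc | exact: HD].
- exact: dual_is_action Hc HD hE Hact.
- exact: dual_continuous_action Hc HD lcG' Hca.
- by apply: dual_absorptive Hc HD hG lcG' _ SV Habs; exists e.
Qed.
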